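(* Let $\gamma,\sigma:[a,b]\to V$ be continuous bounded variation paths, fix $(s,t)\in[a,b]^2$, and define $f(x):=K^{x\gamma,\sigma}(s,t)$ for $x\in\mathbb{R}$. Then $f$ is infinitely differentiable and for every $k\in\mathbb{N}$, \[ f^{(k)}(x)=\sum_{l=0}^\infty x^l\frac{(l+k)!}{l!}\left\langle S(\gamma)^{l+k}_{a,s},S(\sigma)^{l+k}_{a,t}\right\rangle_{l+k}. \] In particular, for $x\neq0$, \[ |f^{(k)}(x)|\le\frac{L_s(\gamma)^{k/2}L_t(\sigma)^{k/2}}{|x|^{k/2}}\,I_k\left(2\sqrt{|x|L_s(\gamma)L_t(\sigma)}\right), \] where $I_k$ is the modified Bessel function of the first kind of order $k$.
   Context: $V$ is a finite-dimensional real inner product space, $\langle\cdot,\cdot\rangle_k$ the induced Hilbert–Schmidt inner product on $V^{\otimes k}$. Signature: $S(\gamma)^0=1$, $S(\gamma)^k_{s,t}=\int_{s<u_1<\dots<u_k<t}d\gamma_{u_1}\otimes\cdots\otimes d\gamma_{u_k}$. $K^{x\gamma,\sigma}(s,t)=\sum_{k\ge0}x^k\langle S(\gamma)^k_{a,s},S(\sigma)^k_{a,t}\rangle_k$. $L_s(\gamma)$ is the length of $\gamma|_{[a,s]}$. *)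

From HB Require Import structures.
From mathcomp Require Import all_boot all_order all_algebra.
From mathcomp Require Import all_classical all_reals all_analysis.
Set Implicit Arguments. Unset Strict Implicit. Unset Printing Implicit Defensive.
Import Order.TTheory GRing.Theory Num.Theory.
Import numFieldNormedType.Exports.
Local Open Scope classical_set_scope.
Local Open Scope ring_scope.

Section Defs.
Context {R : realType}.

(* A partition of [a,b] is s with itv_partition a b s (points a < s_0 < ... < s_{n-1} = b);
   the j-th subinterval is [nth a (a::s) j, nth a s j]; tg gives the tags. *)
Definition RS_sum (a : R) (s tg : seq R) (f g : R -> R) : R :=
  \sum_(0 <= j < size s) f (nth a tg j) * (g (nth a s j) - g (nth a (a :: s) j)).

Definition is_RS_int (a b : R) (f g : R -> R) (I : R) : Prop :=
  forall e : R, 0 < e -> exists2 delta : R, 0 < delta &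
    forall s tg : seq R, itv_partition a b s -> size tg = size s ->
      (forall j, (j < size s)%N -> nth a (a :: s) j <= nth a tg j <= nth a s j) ->
      (forall j, (j < size s)%N -> nth a s j - nth a (a :: s) j < delta) ->
      `|RS_sum a s tg f g - I| < e.

(* the value of the Riemann--Stieltjes integral \int_a^b f dg (0 if it does not exist) *)
Definition RS_int (a b : R) (f g : R -> R) : R := xget 0 [set I | is_RS_int a b f g I].

Definition euclid {d : nat} (v : 'rV[R]_d) : R := Num.sqrt (\sum_i v 0 i ^+ 2).

(* sig_rev gam a w t, with w the REVERSED word:
   S^{()}_{a,t} = 1,  S^{(i1..ik)}_{a,t} = \int_a^t S^{(i1..i(k-1))}_{a,u} d gam^{ik}_u *)
Fixpoint sig_rev {d : nat} (gam : R -> 'rV[R]_d) (a : R) (w : seq 'I_d) : R -> R :=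
  match w with
  | [::] => fun _ => 1
  | i :: w' => fun t => RS_int a t (sig_rev gam a w') (fun u => gam u 0 i)
  end.

(* coefficient of e_{i1} (x) ... (x) e_{ik} in S(gam)^k_{a,t}, for w = [:: i1; ...; ik] *)
Definition sigc {d : nat} (gam : R -> 'rV[R]_d) (a : R) (w : seq 'I_d) (t : R) : R :=
  sig_rev gam a (rev w) t.

Definition sig_inner {d : nat} (gam sig : R -> 'rV[R]_d) (a : R) (k : nat) (s t : R) : R :=
  \sum_(w : k.-tuple 'I_d) sigc gam a w s * sigc sig a w t.

Definition sigK {d : nat} (x : R) (gam sig : R -> 'rV[R]_d) (a s t : R) : R :=
  limn (fun n => \sum_(0 <= k < n) x ^+ k * sig_inner gam sig a k s t).

Definition pvariation {d : nat} (a b : R) (gam : R -> 'rV[R]_d) (s : seq R) : R :=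
  let F := gam \o nth b (a :: s) in
  \sum_(0 <= n < size s) euclid (F n.+1 - F n).

Definition pvariations {d : nat} (a b : R) (gam : R -> 'rV[R]_d) : set R :=
  [set pvariation a b gam s | s in itv_partition a b].

Definition path_bounded_variation {d : nat} (a b : R) (gam : R -> 'rV[R]_d) : Prop :=
  has_ubound (pvariations a b gam).

Definition plength {d : nat} (a b : R) (gam : R -> 'rV[R]_d) : R :=
  sup (pvariations a b gam).

Definition BesselI (k : nat) (z : R) : R :=
  limn (fun n => \sum_(0 <= m < n)
          (z / 2) ^+ (2 * m + k) / ((m`!)%:R * ((m + k)`!)%:R)).

End Defs.

From HB Require Import structures.
From mathcomp Require Import all_boot all_order all_algebra.
From mathcomp Require Import all_classical all_reals all_analysis.
From mathcomp Require Import ring.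
Import Order.TTheory GRing.Theory Num.Theory.
Import numFieldNormedType.Exports.
Local Open Scope classical_set_scope.
Local Open Scope ring_scope.

Set Implicit Arguments. Unset Strict Implicit. Unset Printing Implicit Defensive.

(* Let L_u be the length of the path up to time u. By induction on n, the
   level-n signature at time u has Euclidean norm at most L_u^n / n!: a left
   Riemann-Stieltjes sum for level n+1 is a sum of tensor products of level-n
   terms with increments of the path, whose norms are dominated by a left
   Riemann sum of the integral of L^n / n! dL. By Cauchy-Schwarz the
   coefficients of f(x) = sum_n x^n <S^n_s, S^n_t> are then bounded by
   (L_s L_t)^n / (n!)^2, so f is an entire power series, its derivatives are
   the termwise derivatives, and bounding the k-th derivative termwise gives
   exactly the power series of the modified Bessel function I_k. *)

Lemma natr_fact_gt0 {R : numDomainType} n : (0 : R) < n`!%:R.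
Proof. by rewrite ltr0n fact_gt0. Qed.

Lemma nth_belast (T : Type) (x0 x : T) (s : seq T) j :
  (j < size s)%N -> nth x0 (belast x s) j = nth x0 (x :: s) j.
Proof. by elim: s x j => [|y s IH] x [|j] //= js; rewrite IH. Qed.

Section L2Norm.
Context {R : realType} {I : finType}.
Implicit Types f g r : I -> R.

Definition l2norm f := Num.sqrt (\sum_i f i ^+ 2).

Lemma l2norm_ge0 f : 0 <= l2norm f.
Proof. exact: sqrtr_ge0. Qed.

Lemma sumr_sqr_ge0 f : 0 <= \sum_i f i ^+ 2.
Proof. by apply: sumr_ge0 => i _; apply: sqr_ge0. Qed.

Lemma l2norm_sqr f : l2norm f ^+ 2 = \sum_i f i ^+ 2.
Proof. by rewrite sqr_sqrtr // sumr_sqr_ge0. Qed.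

Lemma cauchy_schwarz f g :
  (\sum_i f i * g i) ^+ 2 <= (\sum_i f i ^+ 2) * (\sum_i g i ^+ 2).
Proof.
have sum_mul (u v : I -> R) : (\sum_i u i) * (\sum_j v j) = \sum_i \sum_j u i * v j.
  by rewrite mulr_suml; apply: eq_bigr => i _; rewrite mulr_sumr.
have lagrange : \sum_i \sum_j (f i * g j - f j * g i) ^+ 2 =
    2 * ((\sum_i f i ^+ 2) * (\sum_i g i ^+ 2) - (\sum_i f i * g i) ^+ 2).
  rewrite expr2 !sum_mul.
  rewrite (eq_bigr (fun i => \sum_j f i ^+ 2 * g j ^+ 2 + \sum_j f j ^+ 2 * g i ^+ 2
       - 2 * \sum_j f i * g i * (f j * g j))); last first.
    by move=> i _; rewrite mulr_sumr -big_split -sumrB /=; apply: eq_bigr => j _; ring.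
  by rewrite sumrB big_split /= -mulr_sumr [X in _ + X - _]exchange_big /=; ring.
rewrite -subr_ge0 -(pmulr_rge0 _ (ltr0Sn R 1)) -lagrange.
by apply: sumr_ge0 => i _; apply: sumr_sqr_ge0.
Qed.

Lemma normr_dot_le f g : `|\sum_i f i * g i| <= l2norm f * l2norm g.
Proof.
rewrite -sqrtr_sqr -sqrtrM ?sumr_sqr_ge0 //.
by rewrite ler_sqrt ?cauchy_schwarz // mulr_ge0 ?sumr_sqr_ge0.
Qed.

Lemma l2normD f g : l2norm (fun i => f i + g i) <= l2norm f + l2norm g.
Proof.
rewrite -(ger0_norm (addr_ge0 (l2norm_ge0 f) (l2norm_ge0 g))) -sqrtr_sqr.
rewrite ler_sqrt ?sqr_ge0 // sqrrD !l2norm_sqr.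
have -> : \sum_i (f i + g i) ^+ 2 =
    \sum_i f i ^+ 2 + (\sum_i f i * g i) *+ 2 + \sum_i g i ^+ 2.
  by rewrite -sumrMnl -!big_split /=; apply: eq_bigr => i _; ring.
rewrite lerD2r lerD2l lerMn2r /=.
exact: le_trans (ler_norm _) (normr_dot_le f g).
Qed.

Lemma l2norm_sum_le (n : nat) (F : nat -> I -> R) :
  l2norm (fun i => \sum_(0 <= j < n) F j i) <= \sum_(0 <= j < n) l2norm (F j).
Proof.
elim: n => [|n IH].
  rewrite big_geq // /l2norm big1 ?sqrtr0 // => i _.
  by rewrite big_geq // expr0n.
under eq_fun do rewrite big_nat_recr //=.
by rewrite big_nat_recr //=; apply: le_trans (l2normD _ _) (lerD IH (lexx _)).
Qed.

Lemma le_l2norm f g : (forall i, `|f i| <= `|g i|) -> l2norm f <= l2norm g.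
Proof.
move=> fg; rewrite ler_sqrt ?sumr_sqr_ge0 //; apply: ler_sum => i _.
by rewrite -(real_normK (num_real (f i))) -(real_normK (num_real (g i))) lerXn2r ?nnegrE.
Qed.

Lemma l2norm_cst (e : R) : 0 <= e -> l2norm (fun=> e) = e * Num.sqrt #|I|%:R.
Proof.
move=> e0; rewrite /l2norm sumr_const -[in LHS]mulr_natr sqrtrM ?sqr_ge0 //.
by rewrite sqrtr_sqr ger0_norm.
Qed.

Lemma l2norm_le_approx (c : I -> R) (B : R) :
  (forall e, 0 < e -> exists2 r : I -> R, l2norm r <= B &
     forall i, `|c i| <= `|r i| + e) ->
  l2norm c <= B.
Proof.
move=> happrox; apply/ler_addgt0Pr => e e0.
have sI0 : 0 < Num.sqrt (#|I|%:R : R) + 1 := ltr_wpDl (sqrtr_ge0 _) ltr01.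
have [r rB cr] := happrox (e / (Num.sqrt #|I|%:R + 1)) (divr_gt0 e0 sI0).
set e' := e / _ in cr.
have e'0 : 0 <= e' by rewrite divr_ge0 ?ltW.
apply: le_trans (le_l2norm (g := fun i => `|r i| + e') _) _.
  by move=> i; rewrite [X in _ <= X]ger0_norm ?addr_ge0.
apply: le_trans (l2normD _ _) _; rewrite l2norm_cst //.
have -> : l2norm (fun i => `|r i|) = l2norm r.
  by congr Num.sqrt; apply: eq_bigr => i _; rewrite real_normK ?num_real.
apply: lerD rB _.
by rewrite /e' mulrAC ler_pdivrMr // ler_pM2l // lerDl.
Qed.
End L2Norm.

Section L2NormReindex.
Context {R : realType}.

Lemma l2norm_mul {I J : finType} (f : I -> R) (g : J -> R) :
  l2norm (fun p : I * J => f p.1 * g p.2) = l2norm f * l2norm g.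
Proof.
rewrite /l2norm -sqrtrM ?sumr_sqr_ge0 //; congr Num.sqrt.
rewrite mulr_suml (eq_bigr (fun i => \sum_j (f i * g j) ^+ 2)) ?pair_big // => i _.
by rewrite mulr_sumr; apply: eq_bigr => j _; rewrite exprMn.
Qed.

Lemma l2norm_bij {I J : finType} (h : J -> I) (F : I -> R) :
  bijective h -> l2norm (F \o h) = l2norm F.
Proof.
by move=> hbij; rewrite /l2norm [in RHS](reindex h) //; apply: onW_bij.
Qed.

Lemma l2norm_tuple_cons {I : finType} (n : nat) (F : n.+1.-tuple I -> R) :
  l2norm F = l2norm (fun p : I * n.-tuple I => F (cons_tuple p.1 p.2)).
Proof.
rewrite -(l2norm_bij F (h := fun p : I * n.-tuple I => cons_tuple p.1 p.2)) //.
exists (fun w => (thead w, behead_tuple w)).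
  by case=> i w /=; congr pair; apply: val_inj.
by move=> w /=; rewrite [in RHS](tuple_eta w); apply: val_inj.
Qed.

Lemma l2norm_rev_tuple {I : finType} (n : nat) (F : n.-tuple I -> R) :
  l2norm (fun w => F (rev_tuple w)) = l2norm F.
Proof.
apply: (l2norm_bij F (h := @rev_tuple n I)).
by exists (@rev_tuple n I) => w; apply: val_inj; rewrite /= revK.
Qed.

End L2NormReindex.

Section PowerIncrements.
Context {R : realType}.

Lemma pow_increment_le (n : nat) (y z : R) : 0 <= y -> y <= z ->
  y ^+ n / n`!%:R * (z - y) <= (z ^+ n.+1 - y ^+ n.+1) / n.+1`!%:R.
Proof.
move=> y0 yz; set S := \sum_(i < n.+1) z ^+ (n.+1.-1 - i) * y ^+ i.
have yS : y ^+ n *+ n.+1 <= S.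
  rewrite -[n.+1 in X in X <= _]card_ord -sumr_const; apply: ler_sum => i _ /=.
  have hi : (i <= n)%N by rewrite -ltnS.
  rewrite -{1}(subnK hi) exprD ler_wpM2r ?exprn_ge0 //.
  by rewrite lerXn2r // nnegrE (le_trans y0).
have -> : (z ^+ n.+1 - y ^+ n.+1) / n.+1`!%:R = (z - y) / n`!%:R * (S / n.+1%:R).
  rewrite subrXX factS natrM -/S; field.
  by rewrite (gt_eqF (natr_fact_gt0 n)) andbT addrC natr1 pnatr_eq0.
rewrite [leLHS](_ : _ = (z - y) / n`!%:R * y ^+ n); last by ring.
apply: ler_wpM2l; first by rewrite divr_ge0 ?subr_ge0 // ltW.
by rewrite ler_pdivlMr ?ltr0Sn // mulr_natr.
Qed.

Lemma sum_pow_increments_le (n m : nat) (x : nat -> R) :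
  (forall j, (j < m)%N -> 0 <= x j <= x j.+1) ->
  \sum_(0 <= j < m) x j ^+ n / n`!%:R * (x j.+1 - x j)
    <= (x m ^+ n.+1 - x 0%N ^+ n.+1) / n.+1`!%:R.
Proof.
move=> xincr; rewrite -(telescope_sumr (fun j => x j ^+ n.+1)) // mulr_suml.
apply: ler_sum_nat => j /andP[_ jm].
by have /andP[x0 xle] := xincr j jm; apply: pow_increment_le.
Qed.

End PowerIncrements.

Section RiemannStieltjes.
Context {R : realType}.

Lemma fine_itv_partition (a u delta : R) : a <= u -> 0 < delta ->
  exists2 s, itv_partition a u s &
    forall j, (j < size s)%N -> nth a s j - nth a (a :: s) j < delta.
Proof.
move=> au delta0; have [<-|ua] := eqVneq a u.
  by exists [::] => //; rewrite /itv_partition /= eqxx.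
have {au ua}au : a < u by rewrite lt_neqAle ua au.
have [N N0 step_lt] : exists2 N : nat, (0 : R) < N%:R & (u - a) / N%:R < delta.
  exists (Num.truncn ((u - a) / delta)).+1; first by rewrite ltr0Sn.
  by rewrite ltr_pdivrMr ?ltr0Sn // mulrC -ltr_pdivrMr // truncnS_gt.
pose p (k : nat) := a + (u - a) * k%:R / N%:R.
have pS k : p k.+1 - p k = (u - a) / N%:R by rewrite /p -natr1; field; rewrite gt_eqF.
have nth_p j : (j <= N)%N -> nth a (a :: mkseq (fun k => p k.+1) N) j = p j.
  case: j => [|j] hj /=; first by rewrite /p mulr0 mul0r addr0.
  by rewrite nth_mkseq.
exists (mkseq (fun k => p k.+1) N); last first.
  move=> j; rewrite size_mkseq => hj.
  by rewrite (nth_mkseq _ _ hj) (nth_p j (ltnW hj)) pS.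
split.
  apply/(pathP a) => i; rewrite size_mkseq => hi.
  by rewrite (nth_p i (ltnW hi)) (nth_mkseq _ _ hi) -subr_gt0 pS divr_gt0 ?subr_gt0.
apply/eqP; rewrite (last_nth a) size_mkseq nth_p // /p mulfK ?gt_eqF //.
by rewrite addrC subrK.
Qed.

(* Stated with norms so that it also covers an integral that does not exist,
   whose junk value [RS_int] is [0]. *)
Lemma RS_int_left_sum_approx (I : finType) (f g : I -> R -> R) (a u e : R) :
  a <= u -> 0 < e ->
  exists2 s, itv_partition a u s &
    forall i, `|RS_int a u (f i) (g i)| <= `|RS_sum a s (belast a s) (f i) (g i)| + e.
Proof.
move=> au e0.
pose approx i dl := forall s, itv_partition a u s ->
  (forall j, (j < size s)%N -> nth a s j - nth a (a :: s) j < dl) ->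
  `|RS_int a u (f i) (g i)| <= `|RS_sum a s (belast a s) (f i) (g i)| + e.
have approx_near i : \forall dl \near 0^'+, approx i dl.
  have [[J hJ]|nexJ] := pselect (exists J, is_RS_int a u (f i) (g i) J); last first.
    apply: nearW => dl s _ _; rewrite /RS_int xgetPN => [|J /= hJ]; last first.
      by apply: nexJ; exists J.
    by rewrite normr0 addr_ge0 // ltW.
  have RS_intP : is_RS_int a u (f i) (g i) (RS_int a u (f i) (g i)) :=
    xgetPex 0 (ex_intro _ J hJ).
  have [dl dl0 hdl] := RS_intP e e0.
  apply: filterS (nbhs_right_lt dl0) => dl' dl'dl s hs hmesh.
  rewrite -lerBlDl; apply: le_trans (lerB_dist _ _) _; rewrite distrC ltW // hdl //.
  - by rewrite size_belast.
  - move=> j js; rewrite nth_belast // lexx ltW //.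
    by case: hs => /(pathP a) /(_ j js).
  - by move=> j js; apply: lt_trans (hmesh j js) dl'dl.
near (0 : R)^'+ => dl.
have dl0 : 0 < dl by near: dl; exact: nbhs_right_gt.
have [s hs hmesh] := fine_itv_partition au dl0.
exists s => // i.
have : forall i, approx i dl by near: dl; apply: filter_forall.
by move/(_ i s hs hmesh).
Unshelve. all: by end_near.
Qed.
End RiemannStieltjes.

Section PathLength.
Context {R : realType} {d : nat}.
Implicit Types (a y z : R) (gam : R -> 'rV[R]_d) (s : seq R).

Lemma euclid_ge0 (v : 'rV[R]_d) : 0 <= euclid v.
Proof. exact: sqrtr_ge0. Qed.

Lemma euclid0 : euclid (0 : 'rV[R]_d) = 0.
Proof. by rewrite /euclid big1 ?sqrtr0 // => i _; rewrite mxE expr0n. Qed.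

Lemma euclidB (v w : 'rV[R]_d) : euclid (v - w) = l2norm (fun i => v 0 i - w 0 i).
Proof. by congr Num.sqrt; apply: eq_bigr => i _; rewrite !mxE. Qed.

Lemma pvariation_ge0 a y gam s : 0 <= pvariation a y gam s.
Proof. by apply: sumr_ge0 => i _; apply: euclid_ge0. Qed.

Lemma pvariation_rcons a y z gam s : itv_partition a y s ->
  pvariation a z gam (rcons s z) = pvariation a y gam s + euclid (gam z - gam y).
Proof.
move=> hs; rewrite /pvariation size_rcons big_nat_recr //=; congr (_ + _).
  apply: eq_big_nat => n /andP[_ ns] /=.
  have ns' : (n < (size s).+1)%N by rewrite ltnS ltnW.
  rewrite -rcons_cons !nth_rcons /= ns ns'.
  by rewrite (set_nth_default y z ns) (set_nth_default y z (_ : n < size (a :: s))%N).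
rewrite nth_rcons ltnn eqxx -rcons_cons nth_rcons /= ltnSn.
by rewrite (itv_partition_nth_size _ hs).
Qed.

Lemma pvariations_neq0 a y gam : a <= y -> pvariations a y gam !=set0.
Proof.
rewrite le_eqVlt => /predU1P[<-|ay].
  by exists (pvariation a a gam [::]), [::] => //; rewrite /itv_partition /= eqxx.
by exists (pvariation a y gam [:: y]), [:: y] => //; apply: itv_partition1.
Qed.

Lemma plength_xx a gam : plength a a gam = 0.
Proof.
rewrite /plength (_ : pvariations a a gam = [set 0]) ?sup1 //.
apply/seteqP; split => [_ [s /itv_partitionxx s0 <-]|x /= ->].
  by rewrite s0 /= /pvariation big_geq.
by exists [::]; rewrite ?/pvariation ?big_geq // /itv_partition /= eqxx.
Qed.

Variables (a b : R) (gam : R -> 'rV[R]_d).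
Hypothesis gamBV : path_bounded_variation a b gam.

Lemma has_ubound_pvariations z : z <= b -> has_ubound (pvariations a z gam).
Proof.
move=> zb; case: gamBV => M hM; exists M => _ [s hs <-].
have [zb'|zb'] := eqVneq z b; first by apply: hM; exists s; rewrite -?zb'.
have {zb zb'}zb : z < b by rewrite lt_neqAle zb' zb.
apply: le_trans (hM _ _); last first.
  by exists (rcons s b) => //; rewrite -cats1; apply: itv_partition_cat hs (itv_partition1 zb).
by rewrite (pvariation_rcons _ _ hs) lerDl euclid_ge0.
Qed.

Lemma pvariation_le_plength y s : y <= b -> itv_partition a y s ->
  pvariation a y gam s <= plength a y gam.
Proof.
move=> yb hs; apply: sup_upper_bound; last by exists s.
split; [exact: pvariations_neq0 (itv_partition_le hs) | exact: has_ubound_pvariations].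
Qed.

Lemma plength_ge0 y : a <= y -> y <= b -> 0 <= plength a y gam.
Proof.
move=> ay yb; have [_ [s hs _]] := pvariations_neq0 gam ay.
exact: le_trans (pvariation_ge0 _ _ _ _) (pvariation_le_plength yb hs).
Qed.

Lemma plength_add_dist y z : a <= y -> y <= z -> z <= b ->
  plength a y gam + euclid (gam z - gam y) <= plength a z gam.
Proof.
move=> ay; rewrite le_eqVlt => /predU1P[<-|yz] zb; first by rewrite subrr euclid0 addr0.
rewrite -lerBrDr; apply: ge_sup; first exact: pvariations_neq0.
move=> _ [s hs <-]; rewrite lerBrDr -(pvariation_rcons _ _ hs).
apply: pvariation_le_plength => //.
by rewrite -cats1; apply: itv_partition_cat hs (itv_partition1 yz).
Qed.

End PathLength.

Section SignatureLevels.
Context {R : realType} {d : nat}.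
Variables (a b : R) (gam : R -> 'rV[R]_d).
Hypothesis gamBV : path_bounded_variation a b gam.

Lemma left_RS_sum_l2norm_le n u s :
  (forall v, a <= v -> v <= u ->
     l2norm (fun w : n.-tuple 'I_d => sig_rev gam a w v) <= plength a v gam ^+ n / n`!%:R) ->
  u <= b -> itv_partition a u s ->
  l2norm (fun p : 'I_d * n.-tuple 'I_d =>
      RS_sum a s (belast a s) (sig_rev gam a p.2) (fun x => gam x 0 p.1))
    <= plength a u gam ^+ n.+1 / n.+1`!%:R.
Proof.
move=> levelB ub hs.
pose tau j := nth a (a :: s) j.
pose L j := plength a (tau j) gam.
have tau_in j : (j <= size s)%N -> a <= tau j <= u.
  move=> js; rewrite /tau (set_nth_default u a) ?ltnS //.
  by rewrite itv_partition_nth_ge ?itv_partition_nth_le ?ltnS.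
have L_incr j : (j < size s)%N ->
    0 <= L j /\ L j + euclid (gam (tau j.+1) - gam (tau j)) <= L j.+1.
  move=> js; have /andP[atau tauu] := tau_in j (ltnW js).
  have /andP[_ tauSu] := tau_in j.+1 js.
  have tau_le : tau j <= tau j.+1 by case: hs => /(pathP a) /(_ j js) /ltW.
  split; first by rewrite /L (plength_ge0 gamBV atau (le_trans tauu ub)).
  by rewrite /L (plength_add_dist gamBV atau tau_le (le_trans tauSu ub)).
pose X j (p : 'I_d * n.-tuple 'I_d) :=
  (gam (tau j.+1) 0 p.1 - gam (tau j) 0 p.1) * sig_rev gam a p.2 (tau j).
have -> : (fun p : 'I_d * n.-tuple 'I_d =>
    RS_sum a s (belast a s) (sig_rev gam a p.2) (fun x => gam x 0 p.1)) =
    (fun p => \sum_(0 <= j < size s) X j p).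
  apply/funext => p; apply: eq_big_nat => j /andP[_ js].
  by rewrite nth_belast // mulrC.
apply: le_trans (l2norm_sum_le _ _) _.
apply: (@le_trans _ _ (\sum_(0 <= j < size s) L j ^+ n / n`!%:R * (L j.+1 - L j))).
  apply: ler_sum_nat => j /andP[_ js].
  have [_ L_add] := L_incr j js; have /andP[atau tauu] := tau_in j (ltnW js).
  rewrite (l2norm_mul (fun i => gam (tau j.+1) 0 i - gam (tau j) 0 i)
                     (fun w : n.-tuple _ => sig_rev gam a w (tau j))) mulrC.
  by rewrite ler_pM ?l2norm_ge0 ?levelB // -euclidB lerBrDl.
apply: le_trans (sum_pow_increments_le _ _) _.
  move=> j js; have [L0 L_add] := L_incr j js.
  by rewrite L0 (le_trans _ L_add) // lerDl euclid_ge0.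
by rewrite /L /tau /= plength_xx expr0n subr0 (itv_partition_nth_size _ hs).
Qed.

Lemma sig_rev_l2norm_le n u : a <= u -> u <= b ->
  l2norm (fun w : n.-tuple 'I_d => sig_rev gam a w u) <= plength a u gam ^+ n / n`!%:R.
Proof.
elim: n u => [|n IH] u au ub.
  rewrite (_ : (fun w : 0.-tuple 'I_d => _) = fun=> 1); last first.
    by apply/funext => w; rewrite tuple0.
  by rewrite l2norm_cst // card_tuple expn0 sqrtr1 mul1r expr0 divr1.
rewrite l2norm_tuple_cons /=; apply: l2norm_le_approx => e e0.
have [s hs RS_approx] := RS_int_left_sum_approx
  (fun p : 'I_d * n.-tuple 'I_d => sig_rev gam a p.2) (fun p x => gam x 0 p.1) au e0.
exists (fun p : 'I_d * n.-tuple 'I_d =>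
    RS_sum a s (belast a s) (sig_rev gam a p.2) (fun x => gam x 0 p.1)) => //.
by apply: left_RS_sum_l2norm_le => // v av vu; apply: IH av (le_trans vu ub).
Qed.

Lemma sigc_l2norm_le n u : a <= u -> u <= b ->
  l2norm (fun w : n.-tuple 'I_d => sigc gam a w u) <= plength a u gam ^+ n / n`!%:R.
Proof.
move=> au ub; rewrite -l2norm_rev_tuple.
under eq_fun do rewrite /sigc /= revK.
exact: sig_rev_l2norm_le.
Qed.

End SignatureLevels.

Lemma sig_inner_le {R : realType} {d : nat} (a b : R) (gam sig : R -> 'rV[R]_d) n s t :
  path_bounded_variation a b gam -> path_bounded_variation a b sig ->
  a <= s -> s <= b -> a <= t -> t <= b ->
  `|sig_inner gam sig a n s t| <= (plength a s gam * plength a t sig) ^+ n / n`!%:R ^+ 2.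
Proof.
move=> gamBV sigBV sa sb ta tb.
apply: le_trans (normr_dot_le (fun w : n.-tuple 'I_d => sigc gam a w s)
                              (fun w => sigc sig a w t)) _.
apply: le_trans (ler_pM (l2norm_ge0 _) (l2norm_ge0 _)
  (sigc_l2norm_le gamBV n sa sb) (sigc_l2norm_le sigBV n ta tb)) _.
by rewrite exprMn expr2 invfM mulrACA.
Qed.

Section PowerSeries.
Context {R : realType}.
Implicit Types (c u : R^nat) (M x : R).

Lemma iter_pseries_diffsE c j l :
  iter j (@pseries_diffs R) c l = (l + j)`!%:R / l`!%:R * c (l + j)%N.
Proof.
elim: j l => [|j IH] l; first by rewrite !addn0 divff ?mul1r ?gt_eqF ?natr_fact_gt0.
rewrite iterS /pseries_diffs IH addSnnS factS natrM.
by field; rewrite !gt_eqF ?natr_fact_gt0 ?ltr0Sn.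
Qed.

Lemma cvg_series_exp_dominated u (A y : R) : 0 <= A -> 0 <= y ->
  (forall l, `|u l| <= A * (y ^+ l / l`!%:R)) -> cvgn (series u).
Proof.
move=> A0 y0 uA; apply: normed_cvg.
apply: (@series_le_cvg _ _ (A *: exp_coeff y)) => [l|l /=|//|].
- exact: normr_ge0.
- by rewrite mulr_ge0 // divr_ge0 ?exprn_ge0 // ltW ?natr_fact_gt0.
- exact: is_cvg_seriesZ (is_cvg_series_exp_coeff y).
Qed.

Section ExponentialType.
Variables (c : R^nat) (M : R).
Hypotheses (M0 : 0 <= M) (cM : forall k, `|c k| <= M ^+ k / k`!%:R).

Lemma iter_pseries_diffs_le j l :
  `|iter j (@pseries_diffs R) c l| <= M ^+ (l + j) / l`!%:R.
Proof.
rewrite iter_pseries_diffsE normrM ger0_norm ?divr_ge0 ?ler0n //.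
apply: le_trans (ler_wpM2l _ (cM _)) _; first by rewrite divr_ge0 ?ler0n.
rewrite [leLHS](_ : _ = M ^+ (l + j) / l`!%:R) //.
by field; rewrite !gt_eqF ?natr_fact_gt0.
Qed.

Lemma cvg_pseries_iter_diffs j x : cvgn (pseries (iter j (@pseries_diffs R) c) x).
Proof.
apply: (@cvg_series_exp_dominated _ (M ^+ j) (M * `|x|)); rewrite ?exprn_ge0 ?mulr_ge0 //.
move=> l; rewrite normrM normrX.
apply: le_trans (ler_wpM2r (exprn_ge0 _ (normr_ge0 _)) (iter_pseries_diffs_le j l)) _.
rewrite [leLHS](_ : _ = M ^+ j * ((M * `|x|) ^+ l / l`!%:R)) //.
by rewrite exprMn exprD; field; rewrite gt_eqF ?natr_fact_gt0.
Qed.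

Lemma is_derive_pseries_iter_diffs j x :
  is_derive x 1 (fun y => limn (pseries (iter j (@pseries_diffs R) c) y))
    (limn (pseries (iter j.+1 (@pseries_diffs R) c) x)).
Proof.
pose K := `|x| + 1.
have xK : `|x| < `|K| by rewrite [X in _ < X]ger0_norm ?ltrDl ?addr_ge0.
exact: (pseries_snd_diffs (@cvg_pseries_iter_diffs j K)
  (@cvg_pseries_iter_diffs j.+1 K) (@cvg_pseries_iter_diffs j.+2 K) xK).
Qed.

Lemma derive1n_pseries k :
  derive1n k (fun x => limn (pseries c x)) =
  fun x => limn (pseries (iter k (@pseries_diffs R) c) x).
Proof.
elim: k => [|k IH]; first by rewrite derive1n0.
apply/funext => x; rewrite derive1nS IH derive1E.
exact: (@derive_val _ _ _ _ _ _ _ (is_derive_pseries_iter_diffs k x)).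
Qed.

Lemma derivable_derive1n_pseries k x :
  derivable (derive1n k (fun y => limn (pseries c y))) x 1.
Proof.
rewrite derive1n_pseries.
exact: (@ex_derive _ _ _ _ _ _ _ (is_derive_pseries_iter_diffs k x)).
Qed.

End ExponentialType.

Section BesselType.
Variables (c : R^nat) (M : R).
Hypotheses (M0 : 0 <= M) (cM : forall k, `|c k| <= M ^+ k / k`!%:R ^+ 2).

Lemma bessel_type_exponential_type k : `|c k| <= M ^+ k / k`!%:R.
Proof.
apply: le_trans (cM k) _; rewrite expr2 invfM mulrA ler_piMr //.
  by rewrite divr_ge0 ?exprn_ge0 ?ler0n.
by rewrite invf_le1 ?natr_fact_gt0 // ler1n fact_gt0.
Qed.

Lemma iter_pseries_diffs_le_bessel k l :
  `|iter k (@pseries_diffs R) c l| <= M ^+ (l + k) / (l`!%:R * (l + k)`!%:R).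
Proof.
rewrite iter_pseries_diffsE normrM ger0_norm ?divr_ge0 ?ler0n //.
apply: le_trans (ler_wpM2l _ (cM _)) _; first by rewrite divr_ge0 ?ler0n.
rewrite [leLHS](_ : _ = M ^+ (l + k) / (l`!%:R * (l + k)`!%:R)) //.
by field; rewrite !gt_eqF ?natr_fact_gt0.
Qed.

Lemma pseries_iter_diffs_le_BesselI k x : x != 0 ->
  `|limn (pseries (iter k (@pseries_diffs R) c) x)| <=
    Num.sqrt M ^+ k / Num.sqrt `|x| ^+ k * BesselI k (2 * Num.sqrt (`|x| * M)).
Proof.
move=> x0; set q := Num.sqrt (`|x| * M).
have q0 : 0 <= q := sqrtr_ge0 _.
set P := Num.sqrt M ^+ k / Num.sqrt `|x| ^+ k.
pose bessel_term m := q ^+ (2 * m + k) / (m`!%:R * (m + k)`!%:R).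
have bessel_term_ge0 m : 0 <= bessel_term m.
  by rewrite divr_ge0 ?exprn_ge0 ?mulr_ge0 ?ler0n.
have -> : BesselI k (2 * q) = limn (series bessel_term).
  by rewrite /BesselI (mulrC 2) mulfK ?pnatr_eq0.
have cvg_bessel : cvgn (series bessel_term).
  apply: (@cvg_series_exp_dominated _ (q ^+ k) (q ^+ 2)); rewrite ?exprn_ge0 //.
  move=> m; rewrite ger0_norm // /bessel_term.
  rewrite [leLHS](_ : _ = q ^+ k * (q ^+ 2 ^+ m / m`!%:R) / (m + k)`!%:R); last first.
    by rewrite exprD exprM invfM; ring.
  rewrite ler_piMr //.
    by rewrite mulr_ge0 ?divr_ge0 ?exprn_ge0 ?ler0n.
  by rewrite invf_le1 ?natr_fact_gt0 // ler1n fact_gt0.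
have P0 : 0 <= P by rewrite divr_ge0 ?exprn_ge0 ?sqrtr_ge0.
have Pq l : P * q ^+ (2 * l + k) = M ^+ (l + k) * `|x| ^+ l.
  have sx0 : Num.sqrt `|x| != 0 by rewrite sqrtr_eq0 -ltNge normr_gt0.
  have Pqk : P * q ^+ k = M ^+ k.
    rewrite /P /q sqrtrM // exprMn mulrA divfK ?expf_neq0 //.
    by rewrite -exprMn -expr2 sqr_sqrtr.
  rewrite exprD exprM sqr_sqrtr ?mulr_ge0 // mulrCA Pqk exprD exprMn.
  by rewrite -mulrA mulrC.
have term_le l : `|iter k (@pseries_diffs R) c l * x ^+ l| <= (P *: bessel_term) l.
  rewrite normrM normrX /= /bessel_term [leRHS]mulrA Pq mulrAC.
  by rewrite ler_wpM2r ?exprn_ge0 // iter_pseries_diffs_le_bessel.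
have cvg_normed : cvgn [normed pseries (iter k (@pseries_diffs R) c) x].
  apply: (@series_le_cvg _ _ (P *: bessel_term)) => [l|l /=|//|].
  - exact: normr_ge0.
  - exact: mulr_ge0.
  - exact: is_cvg_seriesZ.
apply: le_trans (lim_series_norm cvg_normed) _.
rewrite -[_ * _]/(P *: _) -lim_seriesZ //.
by apply: lim_series_le => //; apply: is_cvg_seriesZ.
Qed.

End BesselType.
End PowerSeries.

Theorem mainTheorem13 (R : realType) (d : nat) (a b : R)
    (gam sig : R -> 'rV[R]_d) (s t : R) :
  {within `[a, b], continuous gam} -> {within `[a, b], continuous sig} ->
  path_bounded_variation a b gam -> path_bounded_variation a b sig ->
  s \in `[a, b] -> t \in `[a, b] ->
  let f := fun x : R => sigK x gam sig a s t in
  (forall (k : nat) (x : R), derivable (derive1n k f) x 1) /\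
  (forall (k : nat) (x : R),
     let u := fun n => \sum_(0 <= l < n)
        x ^+ l * (((l + k)`!)%:R / (l`!)%:R) * sig_inner gam sig a (l + k) s t in
     cvgn u /\ derive1n k f x = limn u) /\
  (forall (k : nat) (x : R), x != 0 ->
     `|derive1n k f x| <=
       Num.sqrt (plength a s gam) ^+ k * Num.sqrt (plength a t sig) ^+ k
         / Num.sqrt `|x| ^+ k
       * BesselI k (2 * Num.sqrt (`|x| * plength a s gam * plength a t sig))).
Proof.
move=> _ _ gamBV sigBV /[!in_itv] /andP[sa sb] /andP[ta tb] f.
set L1 := plength a s gam; set L2 := plength a t sig.
have L10 : 0 <= L1 := plength_ge0 gamBV sa sb.
have M0 : 0 <= L1 * L2 := mulr_ge0 L10 (plength_ge0 sigBV ta tb).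
pose c k := sig_inner gam sig a k s t.
have cM k : `|c k| <= (L1 * L2) ^+ k / k`!%:R ^+ 2.
  exact: sig_inner_le gamBV sigBV sa sb ta tb.
have cM' := bessel_type_exponential_type M0 cM.
have -> : f = fun x => limn (pseries c x).
  apply/funext => x; rewrite /f /sigK (_ : (fun n => _) = pseries c x) //.
  by apply/funext => n; apply: eq_bigr => k _; rewrite mulrC.
split; [|split] => k x.
- exact: derivable_derive1n_pseries M0 cM' k x.
- move=> u; rewrite (derive1n_pseries M0 cM').
  have -> : u = pseries (iter k (@pseries_diffs R) c) x.
    apply/funext => n; rewrite /pseries /series /=; apply: eq_bigr => l _.
    by rewrite iter_pseries_diffsE /c; ring.
  by split => //; apply: cvg_pseries_iter_diffs M0 cM' k x.
- move=> x0; rewrite (derive1n_pseries M0 cM') -exprMn -sqrtrM // -(mulrA `|x|).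
  exact: pseries_iter_diffs_le_BesselI M0 cM k x x0.
Qed.
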